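(* Let $0<m<L$, $\alpha>0$, and $\rho \ge \rho_\mathrm{GD}:=\max(1-\alpha m,\ \alpha L-1)$. Let \[ M=\begin{bmatrix} -2Lm\, I & (L+m)I\\ (L+m)I & -2I\end{bmatrix}\in\mathbb{R}^{2n\times 2n}. \] Then $(I,-\alpha I, M)$ is $\rho$-hyperstable, i.e. there exists $c>0$ such that $|x(k)|\le c\rho^k|x(0)|$ for all $k\ge0$ whenever the sequences $x(k),u(k)\in\mathbb{R}^n$ satisfy $x(k+1)=x(k)-\alpha u(k)$ for all $k$ and \[ \sum_{k=0}^N\rho^{-2k}\langle L x(k)-u(k),\ u(k)-m x(k)\rangle\ \ge\ 0 \quad\text{for all } N\ge0. \]
   Context: Here $M$ is the sector-IQC matrix obtained from the general construction $M=\begin{bmatrix}-2LmC^*C&(L+m)C^*\\(L+m)C&-2I\end{bmatrix}$ with $C=I$; the quadratic constraint associated with $M$ is $2\sum_k\rho^{-2k}\langle Lx(k)-u(k),u(k)-mx(k)\rangle\ge0$. *)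

From mathcomp Require Import all_boot all_order all_algebra.
Set Implicit Arguments. Unset Strict Implicit. Unset Printing Implicit Defensive.
Import Order.TTheory GRing.Theory Num.Theory.
Local Open Scope ring_scope.

Definition vdot (R : rcfType) (n : nat) (x y : 'cV[R]_n) : R :=
  \sum_(i < n) x i 0 * y i 0.

Definition vnorm (R : rcfType) (n : nat) (x : 'cV[R]_n) : R :=
  Num.sqrt (vdot x x).

Definition rho_GD (R : rcfType) (m L alpha : R) : R :=
  Num.max (1 - alpha * m) (alpha * L - 1).

(* Sector-IQC constraint (with C = I), up to the positive factor 2:
   for all N, sum_{k=0}^N rho^{-2k} <L x(k) - u(k), u(k) - m x(k)> >= 0. *)
Definition sector_iqc (R : rcfType) (n : nat) (m L rho : R)
  (x u : nat -> 'cV[R]_n) : Prop :=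
  forall N : nat,
    0 <= \sum_(0 <= k < N.+1)
           rho ^- (2 * k)%N * vdot (L *: x k - u k) (u k - m *: x k).

Definition hyperstable_GD (R : rcfType) (n : nat) (m L alpha rho : R) : Prop :=
  exists c : R, 0 < c /\
    forall x u : nat -> 'cV[R]_n,
      (forall k, x k.+1 = x k - alpha *: u k) ->
      sector_iqc m L rho x u ->
      forall k, vnorm (x k) <= c * rho ^+ k * vnorm (x 0%N).

(* The proof is an S-procedure argument.  For rho >= rho_GD there is a
   multiplier lam >= 0 with (a - alpha b)^2 + lam (L a - b)(b - m a) <= rho^2 a^2
   for all reals a, b; applied coordinatewise it gives
   |x(k+1)|^2 + lam s(k) <= rho^2 |x(k)|^2, where s(k) is the sector term.
   Weighting by rho^(-2k) and telescoping, the sector constraint makes the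
   accumulated multiplier term nonnegative, so |x(k)|^2 <= rho^(2k) |x(0)|^2
   and the system is rho-hyperstable with c = 1. *)
From mathcomp Require Import all_boot all_order all_algebra.
From mathcomp Require Import ring lra.
Set Implicit Arguments. Unset Strict Implicit. Unset Printing Implicit Defensive.
Import Order.TTheory GRing.Theory Num.Theory.
Local Open Scope ring_scope.

(* The multiplier completes the square around the sector boundary b = p a;
   the sector term being symmetric in (p, q), this covers both boundaries. *)
Lemma sector_square_completion (R : fieldType) (alpha p q a b : R) :
  q != p ->
  let lam := 2 * alpha * (1 - alpha * p) / (q - p) in
  (a - alpha * b) ^+ 2 + lam * ((q * a - b) * (b - p * a)) =
  (1 - alpha * p) ^+ 2 * a ^+ 2 - (lam - alpha ^+ 2) * (b - p * a) ^+ 2.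
Proof. by move=> qp /=; field; rewrite subr_eq0. Qed.

Lemma sector_multiplier_bound (R : realFieldType) (alpha p q rho a b : R) :
  q != p ->
  let lam := 2 * alpha * (1 - alpha * p) / (q - p) in
  alpha ^+ 2 <= lam -> (1 - alpha * p) ^+ 2 <= rho ^+ 2 ->
  (a - alpha * b) ^+ 2 + lam * ((q * a - b) * (b - p * a)) <= rho ^+ 2 * a ^+ 2.
Proof.
move=> qp lam lam_ge rho_ge; rewrite sector_square_completion // lerBlDr.
apply: ler_wpDr; first by rewrite mulr_ge0 ?sqr_ge0 ?subr_ge0.
by rewrite ler_wpM2r ?sqr_ge0.
Qed.

Lemma exists_sector_multiplier (R : realFieldType) (m L alpha rho : R) :
  0 < m -> m < L -> 0 < alpha -> 1 - alpha * m <= rho -> alpha * L - 1 <= rho ->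
  exists2 lam : R, 0 <= lam & forall a b : R,
    (a - alpha * b) ^+ 2 + lam * ((L * a - b) * (b - m * a)) <= rho ^+ 2 * a ^+ 2.
Proof.
move=> m_gt0 mL alpha_gt0 rho_m rho_L.
have Lm_gt0 : 0 < L - m by rewrite subr_gt0.
have Lm_neq : L != m by rewrite -subr_eq0 gt_eqF.
have [short | long] := lerP (alpha * (L + m)) 2.
- set lam := 2 * alpha * (1 - alpha * m) / (L - m).
  have lam_ge : alpha ^+ 2 <= lam by rewrite ler_pdivlMr //; nra.
  exists lam => [|a b]; first exact: le_trans (sqr_ge0 _) lam_ge.
  by apply: sector_multiplier_bound; rewrite ?ler_sqr ?nnegrE //; nra.
- set lam := 2 * alpha * (1 - alpha * L) / (m - L).
  have lam_ge : alpha ^+ 2 <= lam.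
    by rewrite ler_ndivlMr ?subr_lt0 //; nra.
  exists lam => [|a b]; first exact: le_trans (sqr_ge0 _) lam_ge.
  have -> : (L * a - b) * (b - m * a) = (m * a - b) * (b - L * a) by ring.
  apply: sector_multiplier_bound; rewrite 1?eq_sym //.
  by rewrite -sqrrN opprB ler_sqr ?nnegrE //; nra.
Qed.

Lemma vdot_self_ge0 (R : rcfType) (n : nat) (x : 'cV[R]_n) : 0 <= vdot x x.
Proof. by apply: sumr_ge0 => i _; rewrite -expr2 sqr_ge0. Qed.

Lemma sector_dissipation (R : rcfType) (n : nat) (m L alpha rho lam : R)
    (x u : 'cV[R]_n) :
  (forall a b : R,
    (a - alpha * b) ^+ 2 + lam * ((L * a - b) * (b - m * a)) <= rho ^+ 2 * a ^+ 2) ->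
  vdot (x - alpha *: u) (x - alpha *: u) + lam * vdot (L *: x - u) (u - m *: x)
    <= rho ^+ 2 * vdot x x.
Proof.
move=> scalar_bound; rewrite /vdot !mulr_sumr -big_split /=.
by apply: ler_sum => i _; rewrite !mxE -!expr2.
Qed.

Lemma weighted_dissipation_telescope (R : realFieldType) (q lam : R)
    (D S : nat -> R) :
  0 < q -> (forall k, D k.+1 + lam * S k <= q * D k) ->
  forall N, q ^- N * D N + lam / q * \sum_(0 <= k < N) q ^- k * S k <= D 0%N.
Proof.
move=> q_gt0 step; elim=> [|N IH]; first by rewrite big_geq // mulr0 addr0 invr1 mul1r.
have qN_gt0 : 0 < q ^- N.+1 by rewrite invr_gt0 exprn_gt0.
have stepN := step N; rewrite -(ler_pM2l qN_gt0) in stepN.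
have rescale : q ^- N.+1 * (q * D N) = q ^- N * D N.
  by rewrite exprS invfM; field; rewrite !gt_eqF ?exprn_gt0.
have shift : lam / q * (q ^- N * S N) = q ^- N.+1 * (lam * S N).
  by rewrite exprS invfM; ring.
rewrite big_nat_recr //= mulrDr shift.
rewrite rescale mulrDr in stepN; lra.
Qed.

Lemma sqrt_le_scaled (R : rcfType) (r a b : R) :
  0 <= r -> 0 <= b -> a <= r ^+ 2 * b -> Num.sqrt a <= r * Num.sqrt b.
Proof.
move=> r_ge0 b_ge0 ab; rewrite -[r in r * _]ger0_norm // -sqrtr_sqr.
by rewrite -sqrtrM ?sqr_ge0 // ler_wsqrtr.
Qed.

Theorem lemma2p8 (R : rcfType) (n : nat) (m L alpha rho : R) :
  0 < m -> m < L -> 0 < alpha -> rho_GD m L alpha <= rho ->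
  hyperstable_GD n m L alpha rho.
Proof.
move=> m_gt0 mL alpha_gt0; rewrite /rho_GD ge_max => /andP[rho_m rho_L].
have [lam lam_ge0 scalar_bound] := exists_sector_multiplier m_gt0 mL alpha_gt0 rho_m rho_L.
have rho_gt0 : 0 < rho by nra.
exists 1; split => // x u x_step iqc k.
pose D k := vdot (x k) (x k).
pose S k := vdot (L *: x k - u k) (u k - m *: x k).
have step j : D j.+1 + lam * S j <= rho ^+ 2 * D j.
  by rewrite /D x_step; exact: sector_dissipation.
have := weighted_dissipation_telescope (exprn_gt0 2 rho_gt0) step k.
under eq_bigr do rewrite -exprM.
have iqc_ge0 : 0 <= lam / rho ^+ 2 * \sum_(0 <= j < k) rho ^- (2 * j) * S j.
  rewrite mulr_ge0 ?divr_ge0 ?sqr_ge0 //.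
  by case: k => [|k]; [rewrite big_geq | exact: iqc].
rewrite -exprM => telescope.
rewrite mul1r; apply: sqrt_le_scaled; [exact/exprn_ge0/ltW | exact: vdot_self_ge0 |].
have decay : rho ^- (2 * k) * D k <= D 0%N by lra.
by rewrite -exprM mulnC -ler_pdivrMl ?exprn_gt0 // mulrC.
Qed.
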